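(* Let $G$ be a connected graph with $n\ge 2$ vertices. Then $$EE(G) > e^{2\cos\left(\frac{\pi}{n+1}\right)} + (n-1) - 2\cos\left(\frac{\pi}{n+1}\right).$$
   Context: All graphs are finite, simple and undirected. For a graph $G$ with adjacency matrix $A(G)$ having eigenvalues $\lambda_1\ge\cdots\ge\lambda_n$, the Estrada index is $EE(G)=\sum_{i=1}^n e^{\lambda_i}$. *)

From Stdlib Require Import Reals Lra Lia List Relations.
Open Scope R_scope.

(** Square real matrices of size n are functions nat -> nat -> R
    (only entries with indices < n matter). *)

Definition minor0 (M : nat -> nat -> R) (j : nat) : nat -> nat -> R :=
  fun i k => M (S i) (if Nat.ltb k j then k else S k).

Fixpoint det (n : nat) (M : nat -> nat -> R) : R :=
  match n with
  | O => 1
  | S m => sum_f_R0 (fun j => (-1) ^ j * M O j * det m (minor0 M j)) m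
  end.

Definition simple_graph (n : nat) (adj : nat -> nat -> bool) : Prop :=
  (forall i j, (i < n)%nat -> (j < n)%nat -> adj i j = adj j i) /\
  (forall i, (i < n)%nat -> adj i i = false).

Definition edge (n : nat) (adj : nat -> nat -> bool) (i j : nat) : Prop :=
  (i < n)%nat /\ (j < n)%nat /\ adj i j = true.

Definition connected (n : nat) (adj : nat -> nat -> bool) : Prop :=
  forall i j, (i < n)%nat -> (j < n)%nat -> clos_refl_trans nat (edge n adj) i j.

Definition adj_matrix (adj : nat -> nat -> bool) : nat -> nat -> R :=
  fun i j => if adj i j then 1 else 0.

Definition eigenvalues_of (n : nat) (M : nat -> nat -> R) (l : list R) : Prop :=
  length l = n /\
  forall x : R,
    det n (fun i j => (if Nat.eqb i j then x else 0) - M i j)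
    = fold_right Rmult 1 (map (fun lam => x - lam) l).

Definition estrada_of (l : list R) : R := fold_right Rplus 0 (map exp l).

From Stdlib Require Import Reals List Lra Lia Relations.
From Coquelicot Require Import Coquelicot.
From mathcomp Require Import all_boot all_algebra.
From mathcomp Require Import complex spectral Rstruct zify.
Import order.Order.TTheory GRing.Theory Num.Theory.

(* The power sums of the spectrum of the adjacency matrix A are the traces
   tr(A^k): they are nonnegative, the 0-th is n, and tr(A^(2j)) >= sum_i d_i^j
   where d_i = (A^2)_ii is the degree of i.  Connectivity gives d_i >= 1 for
   all i and, when n >= 3, d_i >= 2 for some i.  Bounding each e^lambda from
   below by its Taylor polynomial of degree 7 (valid on all of R because the
   degree is odd) turns these moment bounds into a lower bound for EE(G) that
   grows like n + n/2; the right-hand side is at most e^2 - 2 + n - 1, and the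
   comparison is a numerical check, made for n = 2, 3 <= n <= 7 and n >= 8
   separately using cos(pi/N) <= 1 - (3/N)^2/2 + (3/N)^4/24. *)

Local Open Scope ring_scope.

Lemma poly_horner_ext (F : numDomainType) (p q : {poly F}) :
  (forall x, p.[x] = q.[x]) -> p = q.
Proof.
move=> pq; apply/eqP; rewrite -subr_eq0; apply/eqP.
pose s := [seq (i%:R : F) | i <- iota 0 (size (p - q))].
apply: (@roots_geq_poly_eq0 _ _ s).
- by apply/allP => x _; rewrite /root hornerD hornerN pq subrr.
- by rewrite map_inj_uniq ?iota_uniq // => a b /eqP; rewrite eqr_nat => /eqP.
- by rewrite size_map size_iota.
Qed.

Lemma horner_char_poly (F : comNzRingType) n (A : 'M[F]_n) x :
  (char_poly A).[x] = \det (x%:M - A).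
Proof.
rewrite /char_poly -horner_evalE -det_map_mx; congr (\det _).
apply/matrixP => i j; rewrite !mxE /= horner_evalE hornerD hornerN hornerC.
by case: (i == j); rewrite /= ?mulr1n ?mulr0n ?hornerX ?horner0.
Qed.

Lemma char_poly_conj (F : numFieldType) n (P A : 'M[F]_n) : P \in unitmx ->
  char_poly (P *m A *m invmx P) = char_poly A.
Proof.
move=> uP; apply: poly_horner_ext => x; rewrite !horner_char_poly.
have -> : x%:M - P *m A *m invmx P = P *m (x%:M - A) *m invmx P.
  by rewrite mulmxBr mulmxBl mul_mx_scalar -scalemxAl mulmxV // scalemx1.
by rewrite !det_mulmx det_inv mulrAC mulrV ?mul1r -?unitmxE.
Qed.

Lemma conj_mxX (F : comUnitRingType) n (P A : 'M[F]_n) k : P \in unitmx ->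
  (P *m A *m invmx P) ^+ k = P *m A ^+ k *m invmx P.
Proof.
move=> uP; elim: k => [|k IHk]; first by rewrite !expr0 mulmx1 mulmxV.
by rewrite !exprS -!mulmxE IHk !mulmxA mulmxKV.
Qed.

Section TriangularPowers.
Context {R : pzSemiRingType} {n : nat}.
Implicit Types A B : 'M[R]_n.

Lemma trig_mulmx_diag A B i : is_trig_mx A -> is_trig_mx B ->
  (A *m B) i i = A i i * B i i.
Proof.
move=> /is_trig_mxP tA /is_trig_mxP tB; rewrite mxE (bigD1 i) //= big1 ?addr0 //.
move=> k /negbTE neq_ki; case: (ltngtP i k) => [lt_ik|lt_ki|/val_inj eq_ik].
- by rewrite tA ?mul0r.
- by rewrite tB ?mulr0.
- by rewrite eq_ik eqxx in neq_ki.
Qed.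

Lemma is_trig_mulmx A B : is_trig_mx A -> is_trig_mx B -> is_trig_mx (A *m B).
Proof.
move=> /is_trig_mxP tA /is_trig_mxP tB; apply/is_trig_mxP => i j lt_ij.
rewrite mxE big1 // => k _; case: (ltnP i k) => [lt_ik|le_ki].
  by rewrite tA ?mul0r.
by rewrite tB ?mulr0 // (leq_ltn_trans le_ki lt_ij).
Qed.

Lemma is_trig_mxX A k : is_trig_mx A -> is_trig_mx (A ^+ k).
Proof.
move=> tA; elim: k => [|k IHk]; first by rewrite expr0 scalar_mx_is_trig.
by rewrite exprS -mulmxE is_trig_mulmx.
Qed.

Lemma trig_mxX_diag A k i : is_trig_mx A -> (A ^+ k) i i = A i i ^+ k.
Proof.
move=> tA; elim: k => [|k IHk]; first by rewrite !expr0 mxE eqxx.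
by rewrite !exprS -mulmxE trig_mulmx_diag ?is_trig_mxX // IHk.
Qed.

End TriangularPowers.

(* Over R[i], Schur's theorem makes A similar to a triangular matrix T; the
   diagonal of T lists the eigenvalues and that of T^k their k-th powers. *)
Lemma power_sum_eigenvalues (R : rcfType) n (A : 'M[R]_n) (l : seq R) :
  char_poly A = \prod_(lam <- l) ('X - lam%:P) ->
  forall k, \sum_(lam <- l) lam ^+ k = \tr (A ^+ k).
Proof.
move=> chA k; case: n A chA => [|n] A chA.
  have /eqP : size (char_poly A) = (size l).+1 by rewrite chA size_prod_XsubC.
  rewrite size_char_poly eqSS eq_sym size_eq0 => /eqP ->.
  by rewrite big_nil /mxtrace big_ord0.
pose rc := real_complex R.
have [P uniP] := Schur (map_mx rc A) (ltn0Sn n).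
have uP := unitarymx_unit uniP.
rewrite /similar_to /= conjumx //; set T := _ *m _ *m _ => trigT.
have chT : perm_eq (map rc l) [seq T i i | i <- enum 'I_n.+1].
  apply: prod_XsubC_eq; rewrite !big_map -enumT big_enum /= -char_poly_trig //.
  by rewrite char_poly_conj // -map_char_poly chA map_prod_XsubC.
have trTk : \tr (T ^+ k) = \tr (map_mx rc A ^+ k).
  by rewrite conj_mxX // mxtrace_mulC mulKmx.
apply: (fmorph_inj rc); rewrite rmorph_sum -trace_map_mx rmorphXn -trTk.
under eq_bigr do rewrite rmorphXn.
rewrite -(big_map rc predT (fun z => z ^+ k)) (perm_big _ chT) big_map big_enum.
by apply: eq_bigr => i _; rewrite trig_mxX_diag.
Qed.

Section NonnegativeMatrices.
Context {R : numDomainType} {n : nat} {B : 'M[R]_n}.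
Hypothesis B_ge0 : forall i j, 0 <= B i j.

Lemma exprn_mx_ge0 k i j : 0 <= (B ^+ k) i j.
Proof.
elim: k i j => [|k IHk] i j; first by rewrite expr0 mxE ler0n.
by rewrite exprSr -mulmxE mxE; apply: sumr_ge0 => l _; apply: mulr_ge0.
Qed.

Lemma mxtrace_exprn_ge0 k : 0 <= \tr (B ^+ k).
Proof. by apply: sumr_ge0 => i _; apply: exprn_mx_ge0. Qed.

Lemma diag_exprn_mx_ge i k : B i i ^+ k <= (B ^+ k) i i.
Proof.
elim: k => [|k IHk]; first by rewrite !expr0 mxE eqxx.
rewrite exprSr [B ^+ k.+1]exprSr -mulmxE mxE (bigD1 i) //=.
apply: le_trans (ler_wpM2r (B_ge0 i i) IHk) _; rewrite lerDl.
by apply: sumr_ge0 => l _; apply: mulr_ge0 => //; apply: exprn_mx_ge0.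
Qed.

End NonnegativeMatrices.

(* A closed walk of length 2j may return to its start after every 2 steps. *)
Lemma mxtrace_exprn_even_ge {R : numDomainType} {n} {B : 'M[R]_n} :
  (forall i j, 0 <= B i j) -> forall j, \sum_i (B ^+ 2) i i ^+ j <= \tr (B ^+ (2 * j)).
Proof.
move=> B_ge0 j; rewrite exprM; apply: ler_sum => i _; apply: diag_exprn_mx_ge.
exact: exprn_mx_ge0.
Qed.

Section PowerSumsOfDegrees.
Context {R : numDomainType} {n : nat} (d : 'I_n -> R).
Hypothesis d_ge1 : forall i, 1 <= d i.

Lemma sum_exprn_ge_card j : n%:R <= \sum_i d i ^+ j.
Proof.
apply: le_trans (ler_sum _ (fun i _ => exprn_ege1 j (d_ge1 i))).
by rewrite sumr_const card_ord.
Qed.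

Lemma sum_exprn_ge_card_exp2 j i0 :
  2 <= d i0 -> n%:R + (2 ^+ j - 1) <= \sum_i d i ^+ j.
Proof.
move=> d_i0; have -> : \sum_i d i ^+ j = \sum_i (d i ^+ j - 1) + n%:R.
  by rewrite sumrB sumr_const card_ord subrK.
rewrite (bigD1 i0) //= [X in X <= _]addrC lerD2r -[2 ^+ j - 1]addr0 lerD //.
  by rewrite lerB // lerXn2r // !nnegrE ?ler0n // (le_trans _ d_i0) ?ler0n.
by apply: sumr_ge0 => i _; rewrite subr_ge0 exprn_ege1.
Qed.

End PowerSumsOfDegrees.

Definition mx_of_fun n (M : nat -> nat -> R) : 'M[R]_n := \matrix_(i, j) M i j.

Lemma sum_f_R0_big (f : nat -> R) m : sum_f_R0 f m = \sum_(i < m.+1) f i.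
Proof.
elim: m => [|m IHm] /=; first by rewrite big_ord_recr big_ord0 /= add0r.
by rewrite IHm [in RHS]big_ord_recr.
Qed.

Lemma det_mx_of_fun n M : det n M = \det (mx_of_fun n M).
Proof.
elim: n M => [|n IHn] M /=; first by rewrite det_mx00.
rewrite sum_f_R0_big (expand_det_row _ ord0); apply: eq_bigr => j _.
rewrite /cofactor IHn !mxE /= RmultE RpowE add0n mulrA [M _ _ * _]mulrC.
congr (_ * \det _); apply/matrixP => i k; rewrite !mxE /= /bump /minor0.
case: (ltnP k j) => [lt_kj|le_jk].
  by have -> : Nat.ltb k j = true by apply/Nat.ltb_lt/ssrnat.ltP.
by have -> : Nat.ltb k j = false by apply/Nat.ltb_ge/ssrnat.leP.
Qed.

Lemma char_poly_of_eigenvalues n M (l : list R) : eigenvalues_of n M l ->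
  char_poly (mx_of_fun n M) = \prod_(lam <- l) ('X - lam%:P).
Proof.
move=> [_ detE]; apply: poly_horner_ext => x.
rewrite horner_char_poly horner_prod.
under [RHS]eq_bigr do rewrite hornerXsubC.
have -> : \prod_(lam <- l) (x - lam) = fold_right Rmult 1 (map (fun lam => x - lam) l).
  by elim: l {detE} => [|a l IHl]; rewrite ?big_nil ?big_cons //= IHl.
rewrite -detE det_mx_of_fun; congr (\det _); apply/matrixP => i j; rewrite !mxE.
case: (Nat.eqb_spec i j) => [/val_inj -> | ne_ij]; first by rewrite eqxx.
by rewrite (introF eqP) // => /(congr1 val)/ne_ij.
Qed.

Lemma clos_rt_exit {T : Type} (E : relation T) (P : pred T) x y :
  clos_refl_trans T E x y -> P x -> ~~ P y -> exists a b, [/\ P a, ~~ P b & E a b].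
Proof.
move=> xy; elim: (clos_rt_rt1n _ _ _ _ xy) => [z -> //|a b c Eab _ IH] Pa Pc.
by case Pb: (P b); [apply: IH | exists a, b; rewrite Pb].
Qed.

Section ConnectedGraphs.
Context {n : nat} {adj : nat -> nat -> bool}.
Hypotheses (G_simple : simple_graph n adj) (G_connected : connected n adj).

Lemma connected_neighbor (i : 'I_n) : (2 <= n)%N -> exists j : 'I_n, adj i j.
Proof.
move=> n_ge2; pose j0 := if i == 0%N :> nat then 1%N else 0%N.
have j0_lt : (j0 < n)%coq_nat by rewrite /j0; case: eqP; lia.
have [a [b [/eqP -> _ [_ [b_lt adj_ib]]]]] :
    exists a b, [/\ a == i :> nat, b != i :> nat & edge n adj a b].
  apply: (@clos_rt_exit _ _ (fun v : nat => v == i) _ _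
            (G_connected _ _ (ssrnat.ltP (ltn_ord i)) j0_lt)) => //.
  by rewrite /j0; case: (eqVneq (i : nat) 0%N) => [-> | i_ne0] //=; rewrite eq_sym.
by exists (Ordinal (introT ssrnat.ltP b_lt)).
Qed.

(* A path from vertex 0 to a third vertex z leaves {0, p}, p a neighbour of 0;
   the vertex of {0, p} where it leaves has two neighbours. *)
Lemma connected_two_neighbors : (3 <= n)%N ->
  exists i j1 j2 : 'I_n, [/\ j1 != j2, adj i j1 & adj i j2].
Proof.
move=> n_ge3; have n_gt0 : (0 < n)%N by lia.
pose v0 := Ordinal n_gt0; have [p adj_0p] := connected_neighbor v0 (ltnW n_ge3).
pose z := if p == 1%N :> nat then 2%N else 1%N.
have z_lt : (z < n)%coq_nat by rewrite /z; case: eqP; lia.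
have [a [b [a_in b_out [a_lt [b_lt adj_ab]]]]] : exists a b,
    [/\ (a == 0%N) || (a == p), ~~ ((b == 0%N) || (b == p)) & edge n adj a b].
  apply: (@clos_rt_exit _ _ (fun v : nat => (v == 0%N) || (v == p)) _ _
            (G_connected _ _ (ssrnat.ltP n_gt0) z_lt)) => //.
  by rewrite /z; case: (eqVneq (p : nat) 1%N) => [-> | p_ne1] //=; rewrite eq_sym.
pose vb := Ordinal (introT ssrnat.ltP b_lt).
have [b_ne0 b_nep] : vb != v0 /\ vb != p.
  by move: b_out; rewrite negb_or -!val_eqE => /andP.
case/orP: a_in => /eqP a_eq; subst a.
- by exists v0, p, vb; split; rewrite // eq_sym.
- exists p, v0, vb; split; rewrite // 1?eq_sym //.
  by rewrite (proj1 G_simple) //; apply/ssrnat.ltP.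
Qed.

End ConnectedGraphs.

Section AdjacencyMatrix.
Context {n : nat} {adj : nat -> nat -> bool}.
Hypotheses (G_simple : simple_graph n adj) (G_connected : connected n adj).
Local Notation A := (mx_of_fun n (adj_matrix adj)).

Lemma adjacency_mx_ge0 i j : 0 <= A i j.
Proof. by rewrite mxE /adj_matrix; case: adj. Qed.

Lemma adjacency_mx_sqr_diag (i : 'I_n) : (A ^+ 2) i i = #|[pred j : 'I_n | adj i j]|%:R.
Proof.
rewrite expr2 -mulmxE mxE -sum1_card natr_sum [RHS]big_mkcond /=.
apply: eq_bigr => j _; rewrite !mxE /adj_matrix inE (proj1 G_simple j i).
- by case: (adj i j); rewrite ?mulr1 ?mulr0.
- exact/ssrnat.ltP.
- exact/ssrnat.ltP.
Qed.

Lemma mxtrace_adjacency_even_ge j : (2 <= n)%N -> n%:R <= \tr (A ^+ (2 * j)).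
Proof.
move=> n_ge2; apply: le_trans (mxtrace_exprn_even_ge adjacency_mx_ge0 j).
apply: sum_exprn_ge_card => i; rewrite adjacency_mx_sqr_diag ler1n.
by have [k adj_ik] := connected_neighbor G_connected i n_ge2; apply/card_gt0P; exists k.
Qed.

Lemma mxtrace_adjacency_even_ge3 j : (3 <= n)%N ->
  n%:R + (2 ^+ j - 1) <= \tr (A ^+ (2 * j)).
Proof.
move=> n_ge3; apply: le_trans (mxtrace_exprn_even_ge adjacency_mx_ge0 j).
have [i [j1 [j2 [j12 adj_ij1 adj_ij2]]]] := connected_two_neighbors G_simple G_connected n_ge3.
apply: (sum_exprn_ge_card_exp2 _ _ j i) => [k|].
  rewrite adjacency_mx_sqr_diag ler1n.
  by have [l adj_kl] := connected_neighbor G_connected k (ltnW n_ge3); apply/card_gt0P; exists l.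
by rewrite adjacency_mx_sqr_diag ler_nat; apply/card_gt1P; exists j1, j2.
Qed.

End AdjacencyMatrix.

Local Close Scope ring_scope.
Local Open Scope R_scope.

Definition exp_taylor7 (x : R) : R :=
  1 + x + x^2/2 + x^3/6 + x^4/24 + x^5/120 + x^6/720 + x^7/5040.

(* The derivative of [exp_taylor7 t * exp (- t)] is [- t^7 / 7! * exp (- t)];
   the degree being odd, it has the sign of [- t], so the maximum is at 0. *)
Lemma exp_taylor7_le_exp x : exp_taylor7 x <= exp x.
Proof.
pose h t := exp_taylor7 t * exp (- t).
pose h' t := - (t^7 / 5040) * exp (- t).
have h_deriv t : derivable_pt_lim h t (h' t).
  apply is_derive_Reals; rewrite /h /h' /exp_taylor7; auto_derive; [done|field].
have h_le1 : h x <= 1.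
  have h0 : h 0 = 1 by rewrite /h /exp_taylor7 Ropp_0 exp_0; field.
  have [x_lt0|[->|x_gt0]] := Rtotal_order x 0; [|lra|].
  - have [c [mvt [x_lt_c c_lt0]]] := MVT_cor2 h h' x 0 x_lt0 (fun c _ => h_deriv c).
    suff : 0 <= h' c * (0 - x) by lra.
    have : 0 < (- c)^7 * exp (- c).
      by apply: Rmult_lt_0_compat; [apply: pow_lt; lra | exact: exp_pos].
    have : c^7 = - (- c)^7 by ring.
    rewrite /h'; nra.
  - have [c [mvt [c_gt0 c_lt_x]]] := MVT_cor2 h h' 0 x x_gt0 (fun c _ => h_deriv c).
    suff : h' c * (x - 0) <= 0 by lra.
    have : 0 < c^7 * exp (- c).
      by apply: Rmult_lt_0_compat; [apply: pow_lt; lra | exact: exp_pos].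
    rewrite /h'; nra.
have : exp x * exp (- x) = 1 by rewrite -exp_plus Rplus_opp_r exp_0.
have := exp_pos x; rewrite /h in h_le1; nra.
Qed.

Lemma exp_le_of_taylor7 y B :
  0 < exp_taylor7 (- y) -> 1 <= B * exp_taylor7 (- y) -> exp y <= B.
Proof.
move=> T_gt0 BT_ge1; have := exp_taylor7_le_exp (- y).
have : exp y * exp (- y) = 1 by rewrite -exp_plus Rplus_opp_r exp_0.
have := exp_pos y; nra.
Qed.

Lemma exp_sub_id_le c d : 0 <= c -> c <= d -> exp c - c <= exp d - d.
Proof.
move=> c_ge0 c_le_d; have -> : exp d = exp c * exp (d - c).
  by rewrite -exp_plus; f_equal; ring.
have := exp_ineq1_le (d - c); have := exp_ineq1_le c; nra.
Qed.

Definition cos_PI_div_ub (N : R) : R := 1 - (3 / N)^2 / 2 + (3 / N)^4 / 24.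

Lemma cos_PI_div_bounds N : 2 < N -> 0 <= cos (PI / N) <= cos_PI_div_ub N.
Proof.
move=> N_gt2; have PI_gt3 : 3 < PI by have := PI2_3_2; lra.
have N_gt0 : 0 < N by lra.
have y_gt0 : 0 < 3 / N by apply: Rdiv_lt_0_compat; lra.
have y_lt : 3 / N < PI / N by apply: Rmult_lt_compat_r; [apply: Rinv_0_lt_compat|].
have x_le : PI / N <= PI / 2.
  by apply: Rmult_le_compat_l; [lra | apply: Rinv_le_contravar; lra].
split; first by apply: cos_ge_0; lra.
apply: Rle_trans (_ : cos (3 / N) <= _).
  by apply: Rlt_le; apply: cos_decreasing_1; lra.
have := proj2 (cos_bound (3 / N) 0 ltac:(lra) ltac:(lra)).
by rewrite /cos_approx /cos_term /cos_PI_div_ub /=; lra.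
Qed.

Lemma exp_two_cos_PI_div_lt N B M : 2 < N ->
  0 < exp_taylor7 (- (2 * cos_PI_div_ub N)) ->
  1 <= B * exp_taylor7 (- (2 * cos_PI_div_ub N)) ->
  B - 2 * cos_PI_div_ub N < M ->
  exp (2 * cos (PI / N)) - 2 * cos (PI / N) < M.
Proof.
move=> N_gt2 T_gt0 BT_ge1 BM; have [c_ge0 c_le] := cos_PI_div_bounds _ N_gt2.
have := exp_sub_id_le (2 * cos (PI / N)) (2 * cos_PI_div_ub N) ltac:(lra) ltac:(lra).
have := exp_le_of_taylor7 _ _ T_gt0 BT_ge1; lra.
Qed.

(* Each constant B bounds e^(2 r) for r = cos_PI_div_ub (n + 1); for n >= 8 the
   crude bound e^(2 cos) - 2 cos <= e^2 - 2 suffices. *)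
Lemma exp_two_cos_PI_lt n : (3 <= n)%N ->
  exp (2 * cos (PI / INR (n + 1))) - 2 * cos (PI / INR (n + 1))
  < 1 + (INR n + 1) / 2 + (INR n + 3) / 24 + (INR n + 7) / 720.
Proof.
move=> n_ge3; rewrite addn1 S_INR; have [n_ge8|n_lt8] := leqP 8 n.
  have n8 : INR 8 <= INR n by apply/le_INR/ssrnat.leP.
  have [c_ge0 _] := cos_PI_div_bounds (INR n + 1) ltac:(simpl in n8; lra).
  have [_ c_le1] := COS_bound (PI / (INR n + 1)).
  set c := cos (PI / (INR n + 1)) in c_ge0 c_le1 *.
  have := exp_sub_id_le (2 * c) 2 ltac:(lra) ltac:(lra).
  have := exp_le_of_taylor7 2 7.69 ltac:(rewrite /exp_taylor7; lra)
            ltac:(rewrite /exp_taylor7; lra).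
  simpl in n8; lra.
case: n n_ge3 n_lt8 => [|[|[|[|[|[|[|[|n]]]]]]]] // _ _;
  [ apply: (exp_two_cos_PI_div_lt _ 4.34) | apply: (exp_two_cos_PI_div_lt _ 5.25)
  | apply: (exp_two_cos_PI_div_lt _ 5.85) | apply: (exp_two_cos_PI_div_lt _ 6.27)
  | apply: (exp_two_cos_PI_div_lt _ 6.56) ];
  rewrite /exp_taylor7 /cos_PI_div_ub /=; lra.
Qed.

Definition moment (l : list R) (k : nat) : R := (\sum_(lam <- l) lam ^+ k)%R.

Lemma moment_nil k : moment nil k = 0.
Proof. by rewrite /moment big_nil. Qed.

Lemma moment_cons a l k : moment (a :: l) k = a ^ k + moment l k.
Proof. by rewrite /moment big_cons RpowE. Qed.

Lemma estrada_ge_moments l :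
  moment l 0 + moment l 1 + moment l 2 / 2 + moment l 3 / 6 + moment l 4 / 24
  + moment l 5 / 120 + moment l 6 / 720 + moment l 7 / 5040 <= estrada_of l.
Proof.
elim: l => [|a l IHl]; first by rewrite !moment_nil /estrada_of /=; lra.
rewrite !moment_cons /estrada_of /= -/(estrada_of l).
have := exp_taylor7_le_exp a; rewrite /exp_taylor7; lra.
Qed.

Lemma estrada_gt_of_moments n l : (2 <= n)%N ->
  moment l 0 = INR n -> (forall k, 0 <= moment l k) ->
  (forall j, INR n <= moment l (2 * j)) ->
  ((3 <= n)%N -> forall j, INR n + (2 ^ j - 1) <= moment l (2 * j)) ->
  estrada_of l >
    exp (2 * cos (PI / INR (n + 1))) + (INR n - 1) - 2 * cos (PI / INR (n + 1)).
Proof.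
move=> n_ge2 m0 m_ge0 m_even m_even3; have := estrada_ge_moments l.
have := m_ge0 1%N; have := m_ge0 3%N; have := m_ge0 5%N; have := m_ge0 7%N.
have [n_eq2|n_ge3] := eqVneq n 2%N.
  have m2 : INR n <= moment l 2 := m_even 1%N.
  have m4 : INR n <= moment l 4 := m_even 2%N.
  have m6 : INR n <= moment l 6 := m_even 3%N.
  subst n; rewrite (_ : INR (2 + 1) = 3) ?cos_PI3; last by rewrite /=; lra.
  rewrite (_ : 2 * (1 / 2) = 1); last by lra.
  have := exp_le_of_taylor7 1 2.72 ltac:(rewrite /exp_taylor7; lra)
            ltac:(rewrite /exp_taylor7; lra).
  simpl in m0, m2, m4, m6 |- *; lra.
have {}n_ge3 : (3 <= n)%N by rewrite ltn_neqAle eq_sym n_ge3.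
have m2 : INR n + (2 ^ 1 - 1) <= moment l 2 := m_even3 n_ge3 1%N.
have m4 : INR n + (2 ^ 2 - 1) <= moment l 4 := m_even3 n_ge3 2%N.
have m6 : INR n + (2 ^ 3 - 1) <= moment l 6 := m_even3 n_ge3 3%N.
have := exp_two_cos_PI_lt _ n_ge3; simpl in m2, m4, m6; lra.
Qed.

Theorem mainTheorem7 (n : nat) (adj : nat -> nat -> bool) (l : list R) :
  (2 <= n)%coq_nat ->
  simple_graph n adj ->
  connected n adj ->
  eigenvalues_of n (adj_matrix adj) l ->
  estrada_of l >
    exp (2 * cos (PI / INR (n + 1))) + (INR n - 1) - 2 * cos (PI / INR (n + 1)).
Proof.
move=> /ssrnat.leP n_ge2 G_simple G_connected eig_l.
have moment_trace k : moment l k = (\tr (mx_of_fun n (adj_matrix adj) ^+ k))%R.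
  exact: power_sum_eigenvalues (char_poly_of_eigenvalues _ _ _ eig_l) k.
apply: (estrada_gt_of_moments _ _ n_ge2) => [|k|j|n_ge3 j]; rewrite moment_trace.
- by rewrite expr0 mxtrace1 INRE.
- by apply/RleP; exact: mxtrace_exprn_ge0 adjacency_mx_ge0 k.
- by rewrite INRE; apply/RleP; exact: mxtrace_adjacency_even_ge G_simple G_connected j n_ge2.
- rewrite INRE RplusE RminusE RpowE; apply/RleP.
  exact: mxtrace_adjacency_even_ge3 G_simple G_connected j n_ge3.
Qed.
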